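(* Let $S=\{0,1,\dots,p-1\}$ with $p\ge 2$, let $m\ge 2$, and let $f:S^m\to S$ be a local rule. The global map $\tau$ is injective if and only if there exists no pair of periodic local configurations for $f$.
   Context: A local configuration is a finite word over $S$. For a word $w=w_1w_2\cdots w_n$ with $n\ge m$, its successor under $f$ is the word $\hat f(w)=u_1\cdots u_{n-m+1}$ with $u_j=f(w_j,w_{j+1},\dots,w_{j+m-1})$. For $k\le n$, $\mathrm{left}_k(w)=w_1\cdots w_k$ and $\mathrm{right}_k(w)=w_{n-k+1}\cdots w_n$. The global map is $\tau:S^{\mathbb Z}\to S^{\mathbb Z}$, $\tau(c)(i)=f(c(i-L),\dots,c(i+R))$ for fixed integers $L,R\ge 0$ with $L+1+R=m$; the CA is (globally) injective if $\tau$ is injective. Two local configurations $\alpha,\beta$ of the same length $n$ are periodic if: $n\ge m$; $\alpha\ne\beta$; $\mathrm{left}_{m-1}(\alpha)=\mathrm{right}_{m-1}(\alpha)$; $\mathrm{left}_{m-1}(\beta)=\mathrm{right}_{m-1}(\beta)$; and $\hat f(\alpha)=\hat f(\beta)$. *)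

From mathcomp Require Import all_boot all_order all_algebra.
Set Implicit Arguments. Unset Strict Implicit. Unset Printing Implicit Defensive.
Import GRing.Theory Num.Theory.

(* successor of a finite word w = w_1...w_n (n >= m):
   u_j = f(w_j, ..., w_{j+m-1}), j = 1..n-m+1 (0-indexed here). *)
Definition succ_word (T : Type) (m : nat) (f : m.-tuple T -> T) (w : seq T)
  : seq T :=
  match w with
  | [::] => [::]
  | x0 :: _ =>
      [seq f [tuple nth x0 w (j + k) | k < m] | j <- iota 0 (size w - m + 1)]
  end.

Definition left_k (T : Type) (k : nat) (w : seq T) := take k w.
Definition right_k (T : Type) (k : nat) (w : seq T) := drop (size w - k) w.

(* global map tau(c)(i) = f(c(i-L), ..., c(i+R)), with L+1+R = m *)
Definition global_map (T : Type) (m : nat) (f : m.-tuple T -> T) (L : nat)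
  (c : int -> T) : int -> T :=
  fun i => f [tuple c (i - L%:Z + k%:Z)%R | k < m].

Definition CA_injective (T : Type) (m : nat) (f : m.-tuple T -> T) (L : nat) :=
  forall c d : int -> T,
    (forall i, global_map f L c i = global_map f L d i) -> forall i, c i = d i.

Definition periodic_pair (T : eqType) (m : nat) (f : m.-tuple T -> T)
  (alpha beta : seq T) : Prop :=
  [/\ size alpha = size beta,
      m <= size alpha,
      alpha != beta,
      (left_k m.-1 alpha = right_k m.-1 alpha /\
       left_k m.-1 beta = right_k m.-1 beta)
    & succ_word f alpha = succ_word f beta].

From mathcomp Require Import all_boot all_order all_algebra zify.
Set Implicit Arguments. Unset Strict Implicit. Unset Printing Implicit Defensive.

(* (=>) A periodic pair alpha, beta of length n repeats with period
   P = n - m + 1 into two distinct configurations of Z with the same image.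
   (<=) If c <> d have the same image and differ at i0, read both on a
   window of length 2K + m around i0, K being the number of pairs of
   (m-1)-blocks.  By pigeonhole, each side of i0 contains a position where
   the two (m-1)-blocks agree, or else a repeated pair of distinct blocks
   which already bounds a periodic pair.  Two agreeing blocks around i0 are
   glued into a periodic pair by appending the left block after the segment
   between them (lemma [periodic_pair_between_agreements]). *)

Section Words.
Variables (T : eqType) (m : nat) (f : m.-tuple T -> T) (x0 : T).

Definition window (w : seq T) j : m.-tuple T := [tuple nth x0 w (j + k) | k < m].

Lemma size_succ_word w : 0 < m -> m <= size w ->
  size (succ_word f w) = size w - m + 1.
Proof. by case: w => [|z w] /= m_gt0 hm; [lia | rewrite size_map size_iota]. Qed.

Lemma nth_succ_word y w j : 0 < m -> m <= size w -> j < size w - m + 1 ->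
  nth y (succ_word f w) j = f (window w j).
Proof.
case: w => [|z w] /= m_gt0 hm hj; first lia.
rewrite (nth_map 0) ?size_iota // nth_iota //.
congr f; apply: eq_from_tnth => k; rewrite !tnth_mktuple.
by apply: set_nth_default => /=; have := ltn_ord k; lia.
Qed.

Definition compatible (A B : seq T) :=
  size A = size B /\ forall j, j + m <= size A -> f (window A j) = f (window B j).

Lemma succ_word_compatible A B : 0 < m -> size A = size B -> m <= size A ->
  succ_word f A = succ_word f B <-> compatible A B.
Proof.
move=> m_gt0 sAB mA; split=> [eAB | [_ cAB]].
  split=> // j hj; have hj' : j < size A - m + 1 by lia.
  have := congr1 (nth x0 ^~ j) eAB.
  by rewrite !nth_succ_word -?sAB.
apply: (@eq_from_nth _ x0); first by rewrite !size_succ_word -?sAB.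
move=> j; rewrite size_succ_word // => hj.
rewrite !nth_succ_word -?sAB //; apply: cAB; lia.
Qed.

Definition cyclic k (w : seq T) := take k w = drop (size w - k) w.

Lemma periodic_pairP A B : 0 < m -> periodic_pair f A B <->
  [/\ compatible A B, m <= size A, A != B, cyclic m.-1 A & cyclic m.-1 B].
Proof.
move=> m_gt0; split=> [[sAB mA nAB [lA lB] eAB] | [cAB mA nAB lA lB]].
  by split=> //; apply/succ_word_compatible.
by split=> //; [case: cAB | apply/succ_word_compatible; case: cAB].
Qed.

Lemma nth_cyclic k w : cyclic k w -> k < size w ->
  forall i, i < size w -> nth x0 w i = nth x0 w (i %% (size w - k)).
Proof.
move=> e hk; set P := size w - k.
elim/ltn_ind => i IH hi.
case: (ltnP i P) => hiP; first by rewrite modn_small.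
have h1 : i - P < k by rewrite /P; lia.
have := congr1 (nth x0 ^~ (i - P)) e; rewrite nth_take // nth_drop.
rewrite -/P subnKC // => <-.
rewrite IH; try lia.
by rewrite -{2}(subnK hiP) modnDr.
Qed.

(* The segment of A covering positions a, ..., b + m - 2, i.e. the windows
   starting at a, ..., b - 1 together with the (m-1)-block at b. *)
Definition seg (A : seq T) a b := drop a (take (b + m.-1) A).

Lemma size_seg A a b : a <= b -> b + m.-1 <= size A ->
  size (seg A a b) = b + m.-1 - a.
Proof. by move=> ab bA; rewrite size_drop size_take; case: ifP; lia. Qed.

Lemma nth_seg A a b i : a + i < b + m.-1 -> nth x0 (seg A a b) i = nth x0 A (a + i).
Proof. by move=> h; rewrite nth_drop nth_take. Qed.

Lemma window_seg A a b j : j + m <= b + m.-1 - a ->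
  window (seg A a b) j = window A (a + j).
Proof.
move=> h; apply: eq_from_tnth => k; rewrite !tnth_mktuple nth_seg -?addnA //.
by have := ltn_ord k; lia.
Qed.

Lemma compatible_seg A B a b : compatible A B -> a <= b -> b + m.-1 <= size A ->
  compatible (seg A a b) (seg B a b).
Proof.
move=> [sAB cAB] ab bA; have bB : b + m.-1 <= size B by rewrite -sAB.
split; first by rewrite !size_seg.
move=> j; rewrite size_seg // => hj; rewrite !window_seg //; apply: cAB; lia.
Qed.

Definition block (A : seq T) a : (m.-1).-tuple T := [tuple nth x0 A (a + k) | k < m.-1].

Lemma nth_block_eq A B a b : block A a = block B b ->
  forall i, i < m.-1 -> nth x0 A (a + i) = nth x0 B (b + i).
Proof.
move=> e i hi; have := congr1 (fun t => tnth t (Ordinal hi)) e.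
by rewrite !tnth_mktuple.
Qed.

Lemma block_eq A B a b : (forall i, i < m.-1 -> nth x0 A (a + i) = nth x0 B (b + i)) ->
  block A a = block B b.
Proof. by move=> e; apply: eq_from_tnth => k; rewrite !tnth_mktuple e. Qed.

Lemma cyclic_seg A a b : a < b -> b + m.-1 <= size A -> block A a = block A b ->
  cyclic m.-1 (seg A a b).
Proof.
move=> ab bA e; have sz := size_seg (ltnW ab) bA.
apply: (@eq_from_nth _ x0); first by rewrite size_take size_drop sz; case: ifP; lia.
move=> i; rewrite size_take sz; case: ifP => h1 h2; last lia.
rewrite nth_take // nth_drop !nth_seg; try lia.
rewrite (nth_block_eq e) //; congr nth; lia.
Qed.

Lemma periodic_pair_of_repeat A B a b : 0 < m -> compatible A B -> a < b ->
  b + m.-1 <= size A -> block A a = block A b -> block B a = block B b ->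
  seg A a b != seg B a b -> exists alpha beta, periodic_pair f alpha beta.
Proof.
move=> m_gt0 cAB ab bA eA eB neq.
have bB : b + m.-1 <= size B by case: cAB => <-.
exists (seg A a b), (seg B a b); apply/(periodic_pairP _ _ m_gt0).
split=> //; [exact: compatible_seg (ltnW ab) bA | | exact: cyclic_seg | exact: cyclic_seg].
by rewrite size_seg //; [lia | exact: ltnW].
Qed.

Lemma cyclic_cat k X w : size w = k -> k <= size X -> take k X = w ->
  cyclic k (X ++ w).
Proof.
move=> sw kX tX; rewrite /cyclic size_cat sw addnK drop_size_cat //.
by rewrite takel_cat // tX.
Qed.

Lemma compatible_catr X Y w : compatible X Y ->
  (forall i, size X - m.-1 <= i < size X -> nth x0 X i = nth x0 Y i) ->
  compatible (X ++ w) (Y ++ w).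
Proof.
move=> [sXY cXY] eXY; split; first by rewrite !size_cat sXY.
move=> j; rewrite size_cat => hj.
have win_cat s : j + m <= size s -> window (s ++ w) j = window s j.
  move=> hs; apply: eq_from_tnth => k; rewrite !tnth_mktuple nth_cat.
  by have := ltn_ord k; case: ifP => //; lia.
case: (leqP (j + m) (size X)) => hjX; first by rewrite !win_cat -?sXY //; apply: cXY.
congr f; apply: eq_from_tnth => k; rewrite !tnth_mktuple !nth_cat -sXY.
by case: ifP => // hk; apply: eXY; lia.
Qed.

End Words.

Section PeriodicPairNotInjective.
Variables (T : eqType) (m : nat) (f : m.-tuple T -> T) (L : nat).
Hypothesis m_gt0 : 0 < m.
Local Open Scope ring_scope.

Lemma modz_natP (t : int) (P : nat) : (0 < P)%N ->
  (t %% P%:Z)%Z = (absz (t %% P%:Z)%Z)%:Z /\ (absz (t %% P%:Z)%Z < P)%N.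
Proof.
move=> P_gt0; have P_neq0 : P%:Z != 0 by rewrite eqz_nat -lt0n.
have ge0 := modz_ge0 t P_neq0; have lt := ltz_pmod t (d := P%:Z) (P_gt0 : 0 < P%:Z).
by split; [rewrite gez0_abs | rewrite -ltz_nat gez0_abs].
Qed.

Definition repeat_conf x0 (w : seq T) (P : nat) (i : int) : T :=
  nth x0 w (absz (i %% P%:Z)%Z).

Lemma global_map_repeat_conf x0 w i : cyclic m.-1 w -> (m <= size w)%N ->
  global_map f L (repeat_conf x0 w (size w - m.-1)) i =
  f (window m x0 w (absz ((i - L%:Z) %% (size w - m.-1)%:Z)%Z)).
Proof.
move=> cw mw; set P := (size w - m.-1)%N.
have P_gt0 : (0 < P)%N by rewrite /P; lia.
have [ej jP] := modz_natP (i - L%:Z) P_gt0.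
move: ej jP; set j := absz _ => ej jP.
congr f; apply: eq_from_tnth => k; rewrite !tnth_mktuple /repeat_conf.
have hk := ltn_ord k.
rewrite -modzDml ej -PoszD modz_nat /= [RHS](nth_cyclic x0 cw); rewrite -/P //; lia.
Qed.

Lemma injective_no_periodic_pair :
  CA_injective f L -> ~ (exists alpha beta, periodic_pair f alpha beta).
Proof.
move=> inj [al [be pp]]; case: al pp => [|x0 al'] pp.
  by case: pp => _ m_le0; rewrite leqNgt m_gt0 in m_le0.
set al := x0 :: al' in pp.
have [[sab cab] mal neq cal cbe] := proj1 (periodic_pairP f x0 _ _ m_gt0) pp.
set P := (size al - m.-1)%N.
have Pbe : P = (size be - m.-1)%N by rewrite /P sab.
have same_image : forall i, global_map f L (repeat_conf x0 al P) i =
                            global_map f L (repeat_conf x0 be P) i.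
  move=> i; have P_gt0 : (0 < P)%N by rewrite /P; lia.
  have jP := proj2 (modz_natP (i - L%:Z) P_gt0).
  rewrite {1}/P global_map_repeat_conf // Pbe global_map_repeat_conf -?Pbe -?sab //.
  by apply: cab; rewrite /P in jP; lia.
have eq_conf := inj _ _ same_image.
move/eqP: neq; apply; apply: (@eq_from_nth _ x0) => // i hi.
have := eq_conf i%:Z; rewrite /repeat_conf modz_nat /=.
have k_al : (m.-1 < size al)%N by lia.
have k_be : (m.-1 < size be)%N by rewrite -sab.
have hi_be : (i < size be)%N by rewrite -sab.
by rewrite (nth_cyclic x0 cal k_al hi) (nth_cyclic x0 cbe k_be hi_be) -sab.
Qed.

End PeriodicPairNotInjective.

Section Gluing.
Variables (T : eqType) (m : nat) (f : m.-tuple T -> T) (x0 : T).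
Hypothesis m_gt1 : 1 < m.
Let m_gt0 : 0 < m := ltnW m_gt1.

(* Two positions a' <= a where the blocks of A and B agree, surrounding a
   position i0 where A and B differ, give a periodic pair: the segment from
   a' to a followed by the common block at a'. *)
Lemma periodic_pair_between_agreements A B a' i0 a : compatible f x0 A B ->
  a' <= i0 <= a -> a + m.-1 <= size A ->
  block m x0 A a' = block m x0 B a' -> block m x0 A a = block m x0 B a ->
  nth x0 A i0 != nth x0 B i0 ->
  exists alpha beta, periodic_pair f alpha beta.
Proof.
move=> cAB /andP [h1 h2] hA agree' agree neq.
have hB : a + m.-1 <= size B by case: cAB => <-.
have sA := size_seg (A := A) (leq_trans h1 h2) hA.
have sB := size_seg (A := B) (leq_trans h1 h2) hB.
pose w := seg m A a' a'.
have sw : size w = m.-1 by rewrite size_seg //; lia.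
have seg_starts_with_w C : a + m.-1 <= size C -> block m x0 C a' = block m x0 A a' ->
    take m.-1 (seg m C a' a) = w.
  move=> hC eC; have sC := size_seg (A := C) (leq_trans h1 h2) hC.
  apply: (@eq_from_nth _ x0); first by rewrite size_take sC sw; case: ifP; lia.
  move=> i; rewrite size_take sC => hi; have him : i < m.-1 by move: hi; case: ifP; lia.
  rewrite nth_take // !nth_seg; try lia.
  by rewrite (nth_block_eq eC).
exists (seg m A a' a ++ w), (seg m B a' a ++ w).
apply/(periodic_pairP f x0 _ _ m_gt0); split.
- apply: compatible_catr; first exact: compatible_seg (leq_trans h1 h2) hA.
  move=> i; rewrite sA => /andP [hi hi']; rewrite !nth_seg; try lia.
  have -> : a' + i = a + (a' + i - a) by lia.
  by apply: (nth_block_eq agree); lia.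
- rewrite size_cat sA sw; lia.
- apply/eqP => e; move: neq; have := congr1 (nth x0 ^~ (i0 - a')) e.
  have hi0 : i0 - a' < a + m.-1 - a' by lia.
  rewrite !nth_cat sA sB hi0 !nth_seg ?subnKC //; try lia.
  by move=> ->; rewrite eqxx.
- by apply: cyclic_cat; rewrite ?sA ?sw ?seg_starts_with_w //; lia.
- by apply: cyclic_cat; rewrite ?sB ?sw ?seg_starts_with_w //; lia.
Qed.

End Gluing.

Section Pigeonhole.
Variables (T : finType) (m : nat) (f : m.-tuple T -> T) (x0 : T).
Hypothesis m_gt0 : 0 < m.

Definition block_pairs := #|{: (m.-1).-tuple T * (m.-1).-tuple T}|.

Lemma agreement_or_periodic_pair A B lo : compatible f x0 A B ->
  lo + block_pairs + m.-1 <= size A ->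
  (exists alpha beta, periodic_pair f alpha beta) \/
  exists2 a, lo <= a <= lo + block_pairs & block m x0 A a = block m x0 B a.
Proof.
move=> cAB hA; pose K := block_pairs.
pose g (i : 'I_K.+1) := (block m x0 A (lo + i), block m x0 B (lo + i)).
have /injectivePn [i [j ij /pair_equal_spec [gA gB]]] : ~~ injectiveb g.
  by apply/injectiveP => /leq_card; rewrite card_ord ltnn.
have [a [b [ab ha hb eA eB]]] : exists a b, [/\ a < b, lo <= a, b <= lo + K,
    block m x0 A a = block m x0 A b & block m x0 B a = block m x0 B b].
  have := ltn_ord i; have := ltn_ord j.
  case: (ltngtP i j) => [h|h|/val_inj eij]; last by rewrite eij eqxx in ij.
  - by exists (lo + i), (lo + j); split; rewrite ?gA ?gB //; lia.
  - by exists (lo + j), (lo + i); split; rewrite ?gA ?gB //; lia.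
have bA : b + m.-1 <= size A by lia.
case: (eqVneq (seg m A a b) (seg m B a b)) => e; last first.
  by left; exact: periodic_pair_of_repeat m_gt0 cAB ab bA eA eB e.
right; exists a; first lia.
apply: block_eq => k hk; have := congr1 (nth x0 ^~ k) e.
by rewrite !nth_seg //; lia.
Qed.

End Pigeonhole.

Section NoPeriodicPairInjective.
Variables (T : finType) (m : nat) (f : m.-tuple T -> T) (L : nat).
Hypothesis m_gt1 : 1 < m.
Local Open Scope ring_scope.

Definition read (c : int -> T) (base : int) (N : nat) : seq T :=
  [seq c (base + i%:Z) | i <- iota 0 N].

Lemma size_read c base N : size (read c base N) = N.
Proof. by rewrite size_map size_iota. Qed.

Lemma nth_read x0 c base N i : (i < N)%N -> nth x0 (read c base N) i = c (base + i%:Z).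
Proof. by move=> hi; rewrite (nth_map 0%N) ?size_iota // nth_iota. Qed.

Lemma compatible_read x0 c d base N :
  (forall i, global_map f L c i = global_map f L d i) ->
  compatible f x0 (read c base N) (read d base N).
Proof.
move=> eq_image; split; first by rewrite !size_read.
move=> j; rewrite size_read => hj.
have window_read e : window m x0 (read e base N) j =
    [tuple e (base + j%:Z + L%:Z - L%:Z + k%:Z) | k < m].
  apply: eq_from_tnth => k; rewrite !tnth_mktuple nth_read; last by have := ltn_ord k; lia.
  by congr e; lia.
by rewrite !window_read; apply: eq_image.
Qed.

Lemma no_periodic_pair_injective :
  ~ (exists alpha beta, periodic_pair f alpha beta) -> CA_injective f L.
Proof.
move=> no_pair c d eq_image i0.
case: (eqVneq (c i0) (d i0)) => // neq; exfalso; apply: no_pair.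
pose K := block_pairs T m; pose base := i0 - K%:Z; pose N := (K + K + m)%N.
pose A := read c base N; pose B := read d base N.
have cAB : compatible f (c i0) A B := compatible_read (c i0) base N eq_image.
have m_gt0 : (0 < m)%N by lia.
have left_range : (0 + K + m.-1 <= size A)%N by rewrite size_read; lia.
have right_range : (K + K + m.-1 <= size A)%N by rewrite size_read; lia.
have [//|[a' /andP [_ ha'] agree']] := agreement_or_periodic_pair m_gt0 cAB left_range.
have [//|[a /andP [ha ha2] agree]] := agreement_or_periodic_pair m_gt0 cAB right_range.
apply: (periodic_pair_between_agreements (i0 := K) m_gt1 cAB _ _ agree' agree).
- by apply/andP; split.
- rewrite size_read /N; lia.
rewrite !nth_read /N; try lia.
by have -> : base + K%:Z = i0 by rewrite /base; lia.
Qed.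

End NoPeriodicPairInjective.

Theorem theorem2 (p m : nat) (f : m.-tuple 'I_p -> 'I_p) (L R : nat) :
  1 < p -> 1 < m -> L + 1 + R = m ->
  CA_injective f L <->
  ~ (exists alpha beta : seq 'I_p, periodic_pair f alpha beta).
Proof.
move=> _ m_gt1 _; split.
- exact: injective_no_periodic_pair (ltnW m_gt1).
- exact: no_periodic_pair_injective m_gt1.
Qed.
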